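(* Let $d$ be a positive integer and let $A\in\mathbb{R}^{[2]\times[n]}$ be a matrix that does not have an elimination ordering. Then there exists $b\in\mathbb{R}^{[2]}$ such that the solution graph $G(R(A,b))$ is not connected.
   Context: Fix a positive integer $d$ and let $D=\{0,1,\dots,d\}$; $[n]=\{1,\dots,n\}$. For $A\in\mathbb{R}^{[m]\times[n]}$ and $b\in\mathbb{R}^{[m]}$, $R(A,b)=\{x\in D^{[n]} : Ax\ge b\}$. For $R\subseteq D^{[n]}$, the solution graph $G(R)$ is the undirected graph with vertex set $R$ in which $x,y$ are adjacent iff they differ in exactly one coordinate. A matrix $A=(a_{ij})$ with column index set $J$ can be eliminated at column $j\in J$ if (i) for every row $i$ with $a_{ij}>0$ we have $a_{ij'}=0$ for all $j'\in J\setminus\{j\}$, or (ii) for every row $i$ with $a_{ij}<0$ we have $a_{ij'}=0$ for all $j'\in J\setminus\{j\}$. For $J'\subseteq[n]$, $\mathrm{elm}(A,J')$ is the submatrix of $A$ obtained by deleting the columns indexed by $J'$. A sequence $(j_1,\dots,j_n)$ of the elements of $[n]$ is an elimination ordering (EO) of $A$ if for every $t\in[n]$ the matrix $\mathrm{elm}(A,\{j_1,\dots,j_{t-1}\})$ can be eliminated at column $j_t$. *)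

From mathcomp Require Import all_boot all_order all_algebra.
From mathcomp Require Export reals.
Set Implicit Arguments. Unset Strict Implicit. Unset Printing Implicit Defensive.
Import Order.TTheory GRing.Theory Num.Theory.
Local Open Scope ring_scope.

Definition point (d n : nat) := {ffun 'I_n -> 'I_d.+1}.

Definition in_R (R : realType) (d m n : nat) (A : 'M[R]_(m, n)) (b : 'cV[R]_m)
  (x : point d n) : bool :=
  [forall i : 'I_m, b i 0 <= \sum_(j < n) A i j * (x j : nat)%:R].

Definition adj (d n : nat) (x y : point d n) : bool :=
  #|[set j : 'I_n | x j != y j]| == 1%N.

Definition sol_edge (R : realType) (d m n : nat) (A : 'M[R]_(m, n)) (b : 'cV[R]_m)
  : rel (point d n) :=
  fun x y => [&& in_R A b x, in_R A b y & adj x y].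

Definition sol_graph_connected (R : realType) (d m n : nat) (A : 'M[R]_(m, n))
  (b : 'cV[R]_m) : Prop :=
  forall x y : point d n, in_R A b x -> in_R A b y -> connect (sol_edge A b) x y.

(* The submatrix of A with remaining column index set J (i.e. elm(A, [n] \ J))
   can be eliminated at column j \in J. *)
Definition can_elim (R : realType) (m n : nat) (A : 'M[R]_(m, n))
  (J : {set 'I_n}) (j : 'I_n) : bool :=
  (j \in J) &&
  ([forall i : 'I_m, (0 < A i j) ==> [forall j' in J :\ j, A i j' == 0]] ||
   [forall i : 'I_m, (A i j < 0) ==> [forall j' in J :\ j, A i j' == 0]]).

Fixpoint eo_ok (R : realType) (m n : nat) (A : 'M[R]_(m, n))
  (J : {set 'I_n}) (s : seq 'I_n) : bool :=
  if s is j :: s' then can_elim A J j && eo_ok A (J :\ j) s' else true.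

Definition elimination_ordering (R : realType) (m n : nat) (A : 'M[R]_(m, n))
  (s : seq 'I_n) : Prop :=
  perm_eq s (enum 'I_n) /\ eo_ok A [set: 'I_n] s.

Definition has_EO (R : realType) (m n : nat) (A : 'M[R]_(m, n)) : Prop :=
  exists s : seq 'I_n, elimination_ordering A s.

(* A column of a two-row matrix is mixed when its entries have strictly
   opposite signs.  A column that is not mixed has constant sign and can be
   eliminated at any stage, so with at most one mixed column one gets an
   elimination ordering by eliminating that column last.

   With two mixed columns, first substitute x_j |-> d - x_j on a suitable set
   of columns (this maps solution graphs isomorphically onto solution graphs,
   after shifting b) so that row 1 becomes nonpositive and every column with a
   positive entry in row 0 is strictly negative in row 1; mixed columns then
   have a positive row-0 entry.  Among these columns let p maximise A 1 j and
   q be the runner-up, and take b = (min (A 0 p) (A 0 q), A 1 q).  The unit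
   points e_p and e_q are feasible, but no edge leaves {x | x_p > 0}: if
   x_p > 0 = y_p and x, y differ only at p, row 0 of y forces a column j <> p
   with A 0 j > 0 and y_j = x_j >= 1, and then row 1 of x is at most
   A 1 p + A 1 j < A 1 j <= A 1 q. *)

From mathcomp Require Import all_boot all_order all_algebra.
From mathcomp Require Import reals.
From mathcomp Require Import ring lra.
Set Implicit Arguments. Unset Strict Implicit. Unset Printing Implicit Defensive.
Import Order.TTheory GRing.Theory Num.Theory.
Local Open Scope ring_scope.

Lemma ord2_cases (i : 'I_2) : i = 0 \/ i = 1.
Proof. by case: i => [[|[|//]]] ?; [left | right]; apply: val_inj. Qed.

Lemma connect_relpre (T : finType) (e : rel T) (f : T -> T) x y :
  connect (relpre f e) x y -> connect e (f x) (f y).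
Proof.
case/connectP=> s es ->; apply/connectP; exists (map f s); first by rewrite path_map.
by rewrite last_map.
Qed.

Section Points.
Variables (R : realType) (d m n : nat).
Implicit Types (A : 'M[R]_(m, n)) (x y : point d n).

Definition row_val A i x := \sum_(j < n) A i j * (x j : nat)%:R.

Lemma in_RE A b x : in_R A b x = [forall i, b i 0 <= row_val A i x].
Proof. by []. Qed.

Lemma adj_sym : symmetric (@adj d n).
Proof.
by move=> x y; rewrite /adj; congr (_ == _); apply: eq_card => j; rewrite !inE eq_sym.
Qed.

Lemma sol_edge_sym A b : symmetric (@sol_edge R d m n A b).
Proof. by move=> x y; rewrite /sol_edge adj_sym andbCA. Qed.

Lemma adj_agree x y k : adj x y -> x k != y k -> forall l, l != k -> x l = y l.
Proof.
move=> /cards1P[k' dxy] xyk l lk; apply/eqP; apply: contraNT lk => xyl.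
have : k \in [set j | x j != y j] by rewrite inE.
have : l \in [set j | x j != y j] by rewrite inE.
by rewrite dxy !inE => /eqP-> /eqP->.
Qed.

Lemma row_val_pos_witness A i x :
  0 < row_val A i x -> exists2 j, 0 < A i j & (0 < x j)%N.
Proof.
case: (pickP [pred j | (0 < A i j) && (0 < x j)%N]) => [j /andP[] | none].
  by exists j.
rewrite ltNge => /negP[]; apply: sumr_le0 => j _.
have /negbT := none j; rewrite /= negb_and -leNgt lt0n negbK.
by case/orP => [Aij | /eqP->]; [exact: mulr_le0_ge0 | rewrite mulr0].
Qed.

Lemma row_val_le_pair A i x j k : (forall l, A i l <= 0) -> j != k ->
  row_val A i x <= A i j * (x j : nat)%:R + A i k * (x k : nat)%:R.
Proof.
move=> row_le0 jk; rewrite /row_val (bigD1 j) //= (bigD1 k) 1?eq_sym //= addrA.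
rewrite -[leRHS]addr0 lerD2l; apply: sumr_le0 => l _.
exact: mulr_le0_ge0.
Qed.

Definition unit_point (k : 'I_n) : point d n := [ffun j => inord (j == k)].

Lemma unit_pointE (d_gt0 : (0 < d)%N) k j : unit_point k j = (j == k) :> nat.
Proof. by rewrite ffunE inordK // ltnS; case: (j == k). Qed.

Lemma row_val_unit_point (d_gt0 : (0 < d)%N) A i k :
  row_val A i (unit_point k) = A i k.
Proof.
rewrite /row_val (bigD1 k) //= big1 => [|j /negbTE jk]; rewrite unit_pointE //.
  by rewrite eqxx mulr1 addr0.
by rewrite jk mulr0.
Qed.

End Points.

Section Reflection.
Variables (R : realType) (d m n : nat) (F : {set 'I_n}).
Implicit Types (A : 'M[R]_(m, n)) (b : 'cV[R]_m) (x y : point d n).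

Definition reflect_point x : point d n :=
  [ffun j => if j \in F then rev_ord (x j) else x j].

Definition reflect_cols A : 'M[R]_(m, n) :=
  \matrix_(i, j) if j \in F then - A i j else A i j.

Definition reflect_shift A : 'cV[R]_m := \col_i \sum_(j in F) A i j * d%:R.

Lemma reflect_pointK : involutive reflect_point.
Proof.
by move=> x; apply/ffunP => j; rewrite !ffunE; case: (j \in F); rewrite ?rev_ordK.
Qed.

Lemma row_val_reflect A i x :
  row_val A i x = row_val (reflect_cols A) i (reflect_point x) + reflect_shift A i 0.
Proof.
rewrite /row_val mxE [X in _ + X]big_mkcond -big_split /=; apply: eq_bigr => j _.
rewrite mxE ffunE; case: ifP => _ /=; last by rewrite addr0.
by rewrite subSS natrB; [ring | rewrite -ltnS].
Qed.

Lemma in_R_reflect A b x :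
  in_R A b x = in_R (reflect_cols A) (b - reflect_shift A) (reflect_point x).
Proof.
by rewrite !in_RE; apply: eq_forallb => i; rewrite row_val_reflect !mxE lerBlDr.
Qed.

Lemma adj_reflect x y : adj (reflect_point x) (reflect_point y) = adj x y.
Proof.
rewrite /adj; congr (_ == _); apply: eq_card => j; rewrite !inE !ffunE.
by case: ifP; rewrite ?(inj_eq rev_ord_inj).
Qed.

Lemma sol_graph_connected_reflect A b :
  @sol_graph_connected R d m n A b ->
  @sol_graph_connected R d m n (reflect_cols A) (b - reflect_shift A).
Proof.
have edgeE : sol_edge A b =2
    relpre reflect_point (sol_edge (reflect_cols A) (b - reflect_shift A)).
  by move=> x y; rewrite /= /sol_edge -!in_R_reflect adj_reflect.
move=> conn x y xR yR; rewrite -[x]reflect_pointK -[y]reflect_pointK.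
apply: connect_relpre; rewrite -(eq_connect edgeE).
by apply: conn; rewrite in_R_reflect reflect_pointK.
Qed.

End Reflection.

Section EliminationOrdering.
Variables (R : realType) (m n : nat) (A : 'M[R]_(m, n)).

Lemma eo_ok_cat (J : {set 'I_n}) s1 s2 :
  eo_ok A J (s1 ++ s2) = eo_ok A J s1 && eo_ok A (J :\: [set j in s1]) s2.
Proof.
elim: s1 J => [|j s1 IH] J /=.
  by congr eo_ok; apply/setP => k; rewrite !inE.
rewrite IH andbA; congr (_ && eo_ok _ _ _); apply/setP => k; rewrite !inE.
by case: (k == j); case: (k \in s1).
Qed.

Lemma eo_ok_uniq (J : {set 'I_n}) (s : seq 'I_n) :
  uniq s -> {subset s <= J} ->
  (forall (K : {set 'I_n}) j, K \subset J -> j \in s -> j \in K -> can_elim A K j) ->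
  eo_ok A J s.
Proof.
elim: s J => //= j s IH J /andP[js us] sJ elimJ.
rewrite elimJ ?mem_head ?sJ ?mem_head //=; apply: IH => // [k ks|K k KJ ks kK].
  by rewrite !inE sJ ?inE ?ks ?orbT // andbT; apply: contraNneq js => <-.
by apply: elimJ => //; [apply: subset_trans KJ (subsetDl _ _) | rewrite inE ks orbT].
Qed.

Lemma can_elim_sign_constant (J : {set 'I_n}) j : j \in J ->
  (forall i, 0 <= A i j) \/ (forall i, A i j <= 0) -> can_elim A J j.
Proof.
rewrite /can_elim => -> /= [col_ge0 | col_le0]; apply/orP; [right | left];
  by apply/forallP => i; rewrite ltNge ?col_ge0 ?col_le0.
Qed.

Lemma can_elim_last (J : {set 'I_n}) j : (#|J| <= 1)%N -> j \in J -> can_elim A J j.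
Proof.
move=> J_le1 jJ; have J1 : J :\ j = set0.
  by apply: cards0_eq; move: J_le1; rewrite (cardsD1 j J) jJ; case: #|_|.
rewrite /can_elim jJ; apply/orP; left; apply/forallP => i; apply/implyP => _.
by apply/forallP => k; rewrite J1 inE.
Qed.

End EliminationOrdering.

Definition mixed_col (R : realType) (n : nat) (A : 'M[R]_(2, n)) j : bool :=
  A 0 j * A 1 j < 0.

Lemma mixed_colN (R : realType) (n : nat) (A : 'M[R]_(2, n)) j :
  ~~ mixed_col A j -> (forall i, 0 <= A i j) \/ (forall i, A i j <= 0).
Proof.
rewrite /mixed_col -leNgt => prod_ge0.
have [a_ge0 | a_lt0] := lerP 0 (A 0 j); have [c_ge0 | c_lt0] := lerP 0 (A 1 j).
- by left => i; case: (ord2_cases i) => ->.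
- by right => i; case: (ord2_cases i) => ->; [nra | apply: ltW].
- by right => i; case: (ord2_cases i) => ->; [apply: ltW | nra].
- by right => i; case: (ord2_cases i) => ->; apply: ltW.
Qed.

Lemma has_EO_few_mixed (R : realType) (n : nat) (A : 'M[R]_(2, n)) :
  (#|[set j | mixed_col A j]| <= 1)%N -> has_EO A.
Proof.
move=> few_mixed; set a := predC (mixed_col A).
exists ([seq j <- enum 'I_n | a j] ++ [seq j <- enum 'I_n | predC a j]).
split; first by rewrite perm_filterC.
have uniq_filter b : uniq [seq j <- enum 'I_n | b j].
  by rewrite filter_uniq ?enum_uniq.
rewrite eo_ok_cat; apply/andP; split; apply: eo_ok_uniq => //.
- by move=> k; rewrite inE.
- move=> K j _; rewrite mem_filter => /andP[/mixed_colN sgn _] jK.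
  exact: can_elim_sign_constant.
- by move=> k; rewrite mem_filter mem_enum !inE /= andbT mem_filter negbK => ->.
move=> K j KJ _ jK; apply: can_elim_last => //.
apply: leq_trans few_mixed; apply: leq_trans (subset_leq_card KJ) _.
apply: subset_leq_card; apply/subsetP => k; rewrite !inE mem_filter mem_enum andbT /=.
by case/nandP => [/negPn | /negP[]].
Qed.

Section NormalizedMatrix.
Variables (R : realType) (d n : nat) (A : 'M[R]_(2, n)).
Hypotheses (d_gt0 : (0 < d)%N) (row1_le0 : forall j, A 1 j <= 0)
  (row1_lt0 : forall j, 0 < A 0 j -> A 1 j < 0).
Variables p q : 'I_n.
Hypotheses (A0p_gt0 : 0 < A 0 p) (A0q_gt0 : 0 < A 0 q) (qp : q != p)
  (p_max : forall j, 0 < A 0 j -> A 1 j <= A 1 p)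
  (q_max : forall j, 0 < A 0 j -> j != p -> A 1 j <= A 1 q).

Definition separating_rhs : 'cV[R]_2 :=
  \col_i (if i == 0 then Num.min (A 0 p) (A 0 q) else A 1 q).

Lemma in_R_separating (x : point d n) : in_R A separating_rhs x =
  (Num.min (A 0 p) (A 0 q) <= row_val A 0 x) && (A 1 q <= row_val A 1 x).
Proof.
rewrite in_RE; apply/forallP/andP => [x_ge | [x0 x1] i].
  by have := x_ge 0; have := x_ge 1; rewrite !mxE.
by case: (ord2_cases i) => ->; rewrite mxE.
Qed.

Lemma separating_edge_gt0 (x y : point d n) :
  sol_edge A separating_rhs x y -> (0 < x p)%N -> (0 < y p)%N.
Proof.
case/and3P => xR yR xy xp_gt0; rewrite lt0n; apply/negP => /eqP yp0.
have xyp : x p != y p by apply: contraTneq xp_gt0 => ->; rewrite yp0.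
move: xR yR; rewrite !in_R_separating => /andP[_ x1] /andP[y0 _].
have [j A0j_gt0 yj_gt0] : exists2 j, 0 < A 0 j & (0 < y j)%N.
  by apply: row_val_pos_witness; apply: lt_le_trans y0; rewrite lt_min A0p_gt0.
have jp : j != p by apply: contraTneq yj_gt0 => ->; rewrite yp0.
have xj_ge1 : 1 <= (x j : nat)%:R :> R by rewrite ler1n (adj_agree xy xyp).
have xp_ge1 : 1 <= (x p : nat)%:R :> R by rewrite ler1n.
have := row_val_le_pair x row1_le0 jp.
have := q_max A0j_gt0 jp; have := row1_lt0 A0p_gt0; have := row1_le0 j.
nra.
Qed.

Lemma separating_disconnected : ~ @sol_graph_connected R d 2 n A separating_rhs.
Proof.
have pR : in_R A separating_rhs (unit_point d p).
  by rewrite in_R_separating !row_val_unit_point // ge_min lexx p_max.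
have qR : in_R A separating_rhs (unit_point d q).
  by rewrite in_R_separating !row_val_unit_point // ge_min lexx orbT lexx.
have p_closed :
    closed (sol_edge A separating_rhs) [pred x : point d n | 0 < x p]%N.
  apply: intro_closed; first exact/sym_connect_sym/sol_edge_sym.
  exact: separating_edge_gt0.
move/(_ _ _ pR qR)/(closed_connect p_closed).
by rewrite !inE !unit_pointE // eqxx eq_sym (negbTE qp).
Qed.

End NormalizedMatrix.

Lemma normalized_disconnected (R : realType) (d n : nat) (A : 'M[R]_(2, n)) :
  (0 < d)%N -> (forall j, A 1 j <= 0) -> (forall j, 0 < A 0 j -> A 1 j < 0) ->
  (1 < #|[set j | (0 < A 0 j)%R]|)%N ->
  exists b, ~ @sol_graph_connected R d 2 n A b.
Proof.
move=> d_gt0 row1_le0 row1_lt0; set P := [set j | 0 < A 0 j] => P_gt1.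
have [p0 p0P] : exists p0, p0 \in P by apply/set0Pn; rewrite -card_gt0 ltnW.
case: (@arg_maxP _ R _ p0 (fun j => j \in P) (fun j => A 1 j) p0P) => p pP p_max.
have [q0 q0P] : exists q0, q0 \in P :\ p.
  by apply/set0Pn; rewrite -card_gt0; move: P_gt1; rewrite (cardsD1 p) pP.
case: (@arg_maxP _ R _ q0 (fun j => j \in P :\ p) (fun j => A 1 j) q0P) => q.
rewrite !inE => /andP[qp A0q_gt0] q_max; move: pP; rewrite inE => A0p_gt0.
exists (separating_rhs A p q); apply: separating_disconnected => // j A0j.
  by apply: p_max; rewrite inE.
by move=> jp; apply: q_max; rewrite !inE jp.
Qed.

Section Normalization.
Variables (R : realType) (n : nat) (A : 'M[R]_(2, n)).

(* Negating exactly these columns sends every column (a, c) into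
   {c < 0} or {c = 0, a <= 0}. *)
Definition normalizing_cols : {set 'I_n} :=
  [set j | if A 1 j == 0 then 0 < A 0 j else 0 < A 1 j].

Local Notation A' := (reflect_cols normalizing_cols A).

Lemma normalized_col_signs j : A' 1 j <= 0 /\ (0 < A' 0 j -> A' 1 j < 0).
Proof.
rewrite !mxE inE; have [A1j | A1j | ->] := ltrgtP (A 1 j) 0.
- by split; lra.
- by split; lra.
- by case: ltrP => A0j; split; lra.
Qed.

Lemma normalized_row1_le0 j : A' 1 j <= 0.
Proof. by case: (normalized_col_signs j). Qed.

Lemma normalized_row1_lt0 j : 0 < A' 0 j -> A' 1 j < 0.
Proof. by case: (normalized_col_signs j). Qed.

Lemma mixed_col_normalized j : mixed_col A j -> 0 < A' 0 j.
Proof.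
have := normalized_row1_le0 j; rewrite /mixed_col !mxE.
by case: (j \in normalizing_cols); nra.
Qed.

End Normalization.

Theorem lemma4 (R : realType) (d n : nat) (hd : (0 < d)%N) (A : 'M[R]_(2, n)) :
  ~ has_EO A ->
  exists b : 'cV[R]_2, ~ @sol_graph_connected R d 2 n A b.
Proof.
move=> noEO; set F := normalizing_cols A.
have mixed_gt1 : (1 < #|[set j | mixed_col A j]|)%N.
  by rewrite ltnNge; apply/negP => /has_EO_few_mixed.
have [|b' disconnected] := normalized_disconnected hd (@normalized_row1_le0 _ _ A)
  (@normalized_row1_lt0 _ _ A).
  apply: leq_trans mixed_gt1 (subset_leq_card _); apply/subsetP => j.
  by rewrite !inE; apply: mixed_col_normalized.
exists (b' + reflect_shift d F A) => /(sol_graph_connected_reflect (F := F)).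
by rewrite addrK.
Qed.
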